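(* Let $(v_1,\dots,v_r)$ be a directed path in $H$ with $d(v_r)\ge1$. Let $Y=s(v_1)E_1\,s(v_2)E_2\cdots s(v_r)E_r$, where for $1\le i<r$, $E_i$ is the concatenation of all strings $e(v_i,w)$, $w$ ranging over the out-neighbors of $v_i$, listed in cyclic order and ending with $e(v_i,v_{i+1})$, and $E_r$ is the concatenation of all strings $e(v_r,w)$ listed in cyclic order starting from an arbitrary out-neighbor. Then the LZ77 parsing of $Y$ has exactly $3r+1+\sum_{i=1}^r d(v_i)$ phrases.
   Context: $H$ is a directed graph without loops in which no vertex has outdegree exactly 1; $d(v)$ denotes the outdegree of $v$. For each vertex $v$ introduce three symbols $v$, $v'$, $\$_v$; all these symbols are pairwise distinct (over all vertices). For a vertex $v$ with outdegree $d=d(v)\ge 1$, let $w_0,\dots,w_{d-1}$ be its out-neighbors in a fixed cyclic order (indices mod $d$); ''cyclic order'' refers to this order. Define $e(v,w_i)=(v'w_{i-1})^4v'w_i$ for $0\le i<d$ and $s(v)=v^4(v')^5\$_v$. LZ77 parsing of a string $z$: $z=z_1z_2\cdots z_t$ where, once $z_1,\dots,z_{i-1}$ are determined and the remaining suffix is nonempty, $z_i$ is the longest nonempty prefix $u$ of the remaining suffix such that $u^-$ ($u$ with its last symbol deleted) has an occurrence in $z$ starting at a position strictly smaller than the starting position of $u$ (the empty string always qualifies). The $z_i$ are the phrases. *)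

From HB Require Import structures.
From mathcomp Require Import all_boot.
Set Implicit Arguments. Unset Strict Implicit. Unset Printing Implicit Defensive.

(* The graph H is given by its out-neighbour lists: [nbrs v] lists the
   out-neighbours w_0, ..., w_{d-1} of v in the fixed cyclic order. *)

Section Defs.
Variable V : eqType.

Inductive sym := Base of V | Prime of V | Dollar of V.

Definition sym_enc (a : sym) : V + V + V :=
  match a with Base v => inl (inl v) | Prime v => inl (inr v) | Dollar v => inr v end.
Definition sym_dec (x : V + V + V) : sym :=
  match x with inl (inl v) => Base v | inl (inr v) => Prime v | inr v => Dollar v end.
Lemma sym_encK : cancel sym_enc sym_dec. Proof. by case. Qed.
HB.instance Definition _ := Equality.copy sym (can_type sym_encK).

Variable nbrs : V -> seq V.

Definition outdeg (v : V) : nat := size (nbrs v).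

Definition nbr (v : V) (i : nat) : V := nth v (nbrs v) (i %% outdeg v).

(* e(v, w_i) = (v' w_{i-1})^4 v' w_i *)
Definition e_str (v : V) (i : nat) : seq sym :=
  flatten (nseq 4 [:: Prime v; Base (nbr v (i + outdeg v).-1)])
  ++ [:: Prime v; Base (nbr v i)].

Definition s_str (v : V) : seq sym :=
  nseq 4 (Base v) ++ nseq 5 (Prime v) ++ [:: Dollar v].

Definition E_from (v : V) (j : nat) : seq sym :=
  flatten [seq e_str v (j + k) | k <- iota 0 (outdeg v)].

(* all e(v,w) in cyclic order, ending with e(v,w) where w = next *)
Definition E_ending (v next : V) : seq sym :=
  E_from v (index next (nbrs v)).+1.

Fixpoint Y_str (j0 : nat) (v : V) (rest : seq V) : seq sym :=
  match rest with
  | [::] => s_str v ++ E_from v j0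
  | w :: rest' => s_str v ++ E_ending v w ++ Y_str j0 w rest'
  end.
End Defs.

Section LZ.
Variable T : eqType.

Definition occurs_before (z u : seq T) (p : nat) : bool :=
  has (fun q => take (size u) (drop q z) == u) (iota 0 p).

(* length of the longest nonempty prefix u of drop p z such that u^- has an
   occurrence in z starting before p (1 always qualifies) *)
Definition phrase_len (z : seq T) (p : nat) : nat :=
  foldr maxn 1
    [seq L <- iota 1 (size z - p) | occurs_before z (take L.-1 (drop p z)) p].

Fixpoint lz77_from (fuel : nat) (z : seq T) (p : nat) : seq (seq T) :=
  match fuel with
  | 0 => [::]
  | f.+1 =>
      if p < size z then
        take (phrase_len z p) (drop p z) :: lz77_from f z (p + phrase_len z p)
      else [::]
  end.

(* the list of phrases of the LZ77 parsing of z (each phrase has length >= 1,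
   so size z steps suffice) *)
Definition lz77 (z : seq T) : seq (seq T) := lz77_from (size z) z 0.
End LZ.

(* Y splits into blocks s(v) E_v, one per vertex of the path, and every block
   but the last ends with the letter of the next vertex. Since the path is
   simple, the symbols v' and $_v never occur before the block of v, so no
   phrase crosses into a block from the left. Within a block preceded by the
   letter v the phrases are v^4 v', (v')^4 $_v, v' w_(j-1),
   (v' w_(j-1))^3 v' w_j and then the d(v) - 1 remaining strings e(v, w), i.e.
   d(v) + 3 phrases; the first block also splits v^4 v' into v and v^3 v'.
   Each phrase is maximal because its last few symbols form a new string:
   this only needs the out-neighbours to be distinct and d(v) >= 2. *)

From mathcomp Require Import all_boot zify.
Set Implicit Arguments. Unset Strict Implicit. Unset Printing Implicit Defensive.

Section SeqFacts.
Variable T : Type.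
Implicit Types (ss : seq (seq T)).

Lemma size_flatten_const ss n :
  all (fun s => size s == n) ss -> size (flatten ss) = n * size ss.
Proof.
elim: ss => [|s ss IH]; first by rewrite muln0.
by case/andP=> /eqP hs /IH hss; rewrite /= size_cat hs hss mulnS.
Qed.

Lemma drop_flatten_const ss n k :
  all (fun s => size s == n) ss -> drop (n * k) (flatten ss) = flatten (drop k ss).
Proof.
elim: ss k => [|s ss IH] [|k] //=; first by rewrite muln0 drop0.
by case/andP=> /eqP hs /IH <-; rewrite drop_cat hs mulnS ltnNge leq_addr addKn.
Qed.

Lemma take_drop_cat_mid (pre mid post : seq T) i n : i + n <= size mid ->
  take n (drop (size pre + i) (pre ++ mid ++ post)) = take n (drop i mid).
Proof.
move=> h; rewrite drop_cat ltnNge leq_addr addKn drop_cat.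
case: ltnP => hi; first by rewrite takel_cat // size_drop; lia.
have -> : n = 0 by lia.
by rewrite !take0.
Qed.
End SeqFacts.

Section LZ77Facts.
Variable T : eqType.
Implicit Types (z : seq T) (s : seq nat).

Lemma foldr_maxn1_le s L : 0 < L -> all (leq^~ L) s -> foldr maxn 1 s <= L.
Proof. by move=> L0; elim: s => //= x s IH /andP[hx /IH]; rewrite geq_max hx. Qed.

Lemma leq_foldr_maxn1 s x : x \in s -> x <= foldr maxn 1 s.
Proof.
elim: s => //= y s IH; rewrite in_cons leq_max => /orP[/eqP->|/IH->];
  by rewrite ?leqnn ?orbT.
Qed.

Lemma foldr_maxn1_gt0 s : 0 < foldr maxn 1 s.
Proof. by elim: s => //= y s IH; rewrite leq_max IH orbT. Qed.

Lemma phrase_len_gt0 z p : 0 < phrase_len z p.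
Proof. exact: foldr_maxn1_gt0. Qed.

(* A window [take k] starting at offset [t] of the phrase that has no earlier
   occurrence bounds the phrase from above: it cannot lie inside [u^-]. *)
Lemma phrase_lenE z p L t k :
  0 < L -> p + L <= size z ->
  (L = 1 \/ exists2 q, q < p & take L.-1 (drop q z) = take L.-1 (drop p z)) ->
  0 < k -> t + k <= L ->
  (forall q, q < p + t -> take k (drop q z) != take k (drop (p + t) z)) ->
  phrase_len z p = L.
Proof.
move=> L0 hL hocc k0 htk fresh; apply/eqP; rewrite eqn_leq; apply/andP; split.
- apply: foldr_maxn1_le => //; apply/allP => x.
  rewrite mem_filter mem_iota => /andP[/hasP[q] /[!mem_iota] /andP[_ qp] /eqP occ].
  move=> /andP[x1 x2]; rewrite leqNgt; apply/negP => Lx.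
  move: occ; rewrite size_take size_drop ifT; last by lia.
  move=> /(congr1 (fun w => drop t (take (t + k) w))) /=.
  rewrite !take_takel; try lia.
  rewrite (addnC t k) -!take_drop !drop_drop => occ.
  by move/negP: (fresh (q + t) ltac:(lia)); rewrite addnC occ addnC eqxx.
- case: hocc => [->|[q qp occ]]; first exact: foldr_maxn1_gt0.
  apply: leq_foldr_maxn1; rewrite mem_filter mem_iota; apply/andP; split; last by lia.
  apply/hasP; exists q; first by rewrite mem_iota; lia.
  by rewrite size_take size_drop ifT ?occ //; lia.
Qed.

Lemma lz77_from_fuel z f g p : size z - p <= f -> size z - p <= g ->
  lz77_from f z p = lz77_from g z p.
Proof.
elim: f g p => [|f IH] [|g] p hf hg //=; try by rewrite ifF //; lia.
by case: ifP => // hp; congr cons; apply: IH; have := phrase_len_gt0 z p; lia.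
Qed.

Definition lz77_suffix z p : seq (seq T) := lz77_from (size z - p) z p.

Lemma lz77E z : lz77 z = lz77_suffix z 0.
Proof. by rewrite /lz77_suffix subn0. Qed.

Lemma size_lz77_suffix_step z p L : p < size z -> phrase_len z p = L ->
  size (lz77_suffix z p) = (size (lz77_suffix z (p + L))).+1.
Proof.
move=> hp <-; rewrite /lz77_suffix -(prednK (_ : 0 < size z - p)) /= ?hp; last by lia.
congr S; congr size; apply: lz77_from_fuel => //.
by have := phrase_len_gt0 z p; lia.
Qed.

Lemma lz77_suffix_end z p : size z <= p -> lz77_suffix z p = [::].
Proof. by move=> h; rewrite /lz77_suffix; have -> : size z - p = 0 by lia. Qed.

Lemma cat_window_fresh (x0 : T) (pre mid post : seq T) i n :
  i + n <= size mid -> 0 < n -> nth x0 mid i \notin pre ->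
  (forall i', i' < i -> take n (drop i' mid) != take n (drop i mid)) ->
  forall q, q < size pre + i ->
    take n (drop q (pre ++ mid ++ post)) != take n (drop (size pre + i) (pre ++ mid ++ post)).
Proof.
move=> hs hn hpre fresh q hq; case: (ltnP q (size pre)) => hq'.
  apply/eqP => /(congr1 (nth x0 ^~ 0)).
  rewrite !nth_take // !nth_drop !addn0 nth_cat hq' nth_cat ltnNge leq_addr addKn.
  by rewrite nth_cat ifT; [move=> e; move: hpre; rewrite -e mem_nth | lia].
rewrite -(subnKC hq') !take_drop_cat_mid; try lia.
by apply: fresh; lia.
Qed.
End LZ77Facts.

Section Block.
Variables (V : eqType) (nbrs : V -> seq V) (v : V).
Hypothesis nbrs_uniq : uniq (nbrs v).
Hypothesis deg_gt1 : 1 < outdeg nbrs v.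
Local Notation d := (outdeg nbrs v).
Local Notation w := (nbr nbrs v).

Lemma nbr_eqmod i i' : w i = w i' -> i = i' %[mod d].
Proof. by move/eqP; rewrite /nbr nth_uniq ?ltn_pmod //; [move/eqP | lia | lia]. Qed.

Lemma nbr_pred_neq i : w (i + d).-1 != w i.
Proof.
apply/eqP => /nbr_eqmod /eqP; rewrite -{2}(addn0 i) -subn1 -addnBA; last by lia.
by rewrite eqn_modDl mod0n modn_small; lia.
Qed.

Lemma nbr_predS i : w (i.+1 + d).-1 = w i.
Proof. by rewrite addSn /= /nbr modnDr. Qed.

Lemma nbr_shift_inj j k k' : k < d -> k' < d -> w (j + k) = w (j + k') -> k = k'.
Proof. by move=> hk hk' /nbr_eqmod /eqP; rewrite eqn_modDl !modn_small // => /eqP. Qed.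

Variable j : nat.
Local Notation Ev := (E_from nbrs v j).
Local Notation ek k := (e_str nbrs v (j + k)).
Local Notation block := (s_str v ++ Ev).
Local Notation edge_tail k :=
  [:: Prime v; Base (w (j + k + d).-1); Prime v; Base (w (j + k))].

Lemma E_from_uniform : all (fun s => size s == 10) [seq ek k | k <- iota 0 d].
Proof. by apply/allP => x /mapP[k _ ->]. Qed.

Lemma size_E_from : size Ev = 10 * d.
Proof. by rewrite (size_flatten_const E_from_uniform) size_map size_iota. Qed.

Lemma drop_E_from k : k < d -> drop (10 * k) Ev = ek k ++ drop (10 * k.+1) Ev.
Proof.
move=> hk; rewrite !(drop_flatten_const _ E_from_uniform).
by rewrite (drop_nth [::]) ?size_map ?size_iota //= (nth_map 0) ?size_iota ?nth_iota.
Qed.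

Lemma E_from_head : Ev = ek 0 ++ drop 10 Ev.
Proof. by rewrite -[LHS]drop0 -(muln0 10) drop_E_from //; lia. Qed.

Lemma size_block : size block = 10 + 10 * d.
Proof. by rewrite size_cat size_E_from. Qed.

Lemma drop_block k r : k < d ->
  drop (10 + 10 * k + r) block = drop r (ek k ++ drop (10 * k.+1) Ev).
Proof.
move=> hk; rewrite drop_cat (_ : size (s_str v) = 10) //.
have -> : (10 + 10 * k + r < 10) = false by lia.
rewrite (_ : _ - 10 = r + 10 * k); last by lia.
by rewrite -drop_drop drop_E_from.
Qed.

Lemma drop_block_edge k : k < d -> drop (10 + 10 * k) block = ek k ++ drop (10 * k.+1) Ev.
Proof. by move=> hk; rewrite -(addn0 (10 + 10 * k)) drop_block. Qed.

Ltac fresh_by_symbols i hi :=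
  first [ exfalso; lia
        | case: i hi => [|i] hi;
          [ by apply/eqP; rewrite /s_str /e_str /= => H; congruence
          | fresh_by_symbols i hi ] ].

(* An earlier occurrence of the last four symbols of e(v, w_(j+k)) would force
   w_(j+k-1) = w_(j+k), or w_(j+k') = w_(j+k) for some k' < k. *)
Lemma edge_tail_fresh k i : k < d -> i < 16 + 10 * k ->
  take 4 (drop i block) != edge_tail k.
Proof.
move=> hk hi; case: (ltnP i 10) => h10.
  by clear hi; rewrite E_from_head; fresh_by_symbols i h10.
move: (divn_eq (i - 10) 10) (@ltn_pmod (i - 10) 10 isT).
move: ((i - 10) %/ 10) ((i - 10) %% 10) => k' r hdiv hr.
have -> : i = 10 + 10 * k' + r by lia.
have hk' : k' <= k by lia.
rewrite drop_block; last by lia.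
have neq := nbr_pred_neq (j + k).
case: r hr hdiv => [|[|[|[|[|[|[|[|[|[|r]]]]]]]]]] hr hdiv; apply/eqP;
  rewrite /e_str /= => H; try congruence.
- by move: neq; case: H => <- <-; rewrite eqxx.
- by move: neq; case: H => <- <-; rewrite eqxx.
- by move: neq; case: H => <- <-; rewrite eqxx.
- by case: H => _ /esym/(nbr_shift_inj hk (leq_ltn_trans hk' hk)); lia.
- move: H; rewrite drop_E_from /= ?addnS ?nbr_predS; last by lia.
  by case=> e1 e2; move: neq; rewrite -e1 -e2 eqxx.
- lia.
Qed.

Variables (pre post : seq (sym V)).
Hypothesis prime_notin_pre : Prime v \notin pre.
Hypothesis dollar_notin_pre : Dollar v \notin pre.
Local Notation z := (pre ++ block ++ post).
Local Notation b := (size pre).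

Lemma size_z : size z = b + (10 + 10 * d) + size post.
Proof. by rewrite !size_cat size_E_from /=; lia. Qed.

Lemma phrase_len_prime_run : phrase_len z (b + 5) = 5.
Proof.
apply: (@phrase_lenE _ _ _ _ 4 1) => //.
- by rewrite size_z; lia.
- right; exists (b + 4); first by lia.
  rewrite !take_drop_cat_mid ?size_block; try lia.
  by rewrite E_from_head.
- rewrite -addnA; eapply (@cat_window_fresh _ (Dollar v)); rewrite ?size_block //; try lia.
  by move=> i' hi'; rewrite E_from_head; fresh_by_symbols i' hi'.
Qed.

Lemma phrase_len_first_pair : phrase_len z (b + 10) = 2.
Proof.
apply: (@phrase_lenE _ _ _ _ 0 2) => //.
- by rewrite size_z; lia.
- right; exists (b + 4); first by lia.
  rewrite !take_drop_cat_mid ?size_block; try lia.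
  by rewrite E_from_head.
- rewrite addn0; eapply (@cat_window_fresh _ (Dollar v)); rewrite ?size_block //; try lia.
  + by rewrite E_from_head.
  + by move=> i' hi'; rewrite E_from_head; fresh_by_symbols i' hi'.
Qed.

Lemma phrase_len_first_edge : phrase_len z (b + 12) = 8.
Proof.
apply: (@phrase_lenE _ _ _ _ 4 4) => //.
- by rewrite size_z; lia.
- right; exists (b + 10); first by lia.
  rewrite !take_drop_cat_mid ?size_block; try lia.
  by rewrite E_from_head.
- rewrite -addnA; eapply (@cat_window_fresh _ (Dollar v)); rewrite ?size_block //; try lia.
  + by rewrite E_from_head.
  + move=> i' hi'.
    have -> : take 4 (drop (12 + 4) block) = edge_tail 0 by rewrite E_from_head /= ?take0.
    by apply: edge_tail_fresh; lia.
Qed.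

Lemma phrase_len_edge k : 0 < k < d -> phrase_len z (b + (10 + 10 * k)) = 10.
Proof.
case: k => [|k] // /andP[_ hk].
apply: (@phrase_lenE _ _ _ _ 6 4) => //.
- by rewrite size_z; lia.
- right; exists (b + (10 + 10 * k + 8)); first by lia.
  rewrite !take_drop_cat_mid ?size_block; try lia.
  rewrite drop_block; last by lia.
  by rewrite drop_block_edge // (drop_E_from (k := k.+1)) //= /e_str /= addnS nbr_predS.
- rewrite -addnA; eapply (@cat_window_fresh _ (Dollar v)); rewrite ?size_block //; try lia.
  + by rewrite -nth_drop drop_block_edge.
  + move=> i' hi'.
    have -> : take 4 (drop (10 + 10 * k.+1 + 6) block) = edge_tail k.+1.
      by rewrite drop_block /= ?take0.
    by apply: edge_tail_fresh; lia.
Qed.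

Lemma size_lz77_edges n k : 0 < k -> k + n = d ->
  size (lz77_suffix z (b + (10 + 10 * k))) =
    n + size (lz77_suffix z (b + (10 + 10 * d))).
Proof.
elim: n k => [|n IH] k hk hkn.
  by rewrite addn0 in hkn; rewrite hkn.
rewrite (size_lz77_suffix_step (L := 10)); last (by apply: phrase_len_edge; lia);
  last by rewrite size_z; lia.
have -> : b + (10 + 10 * k) + 10 = b + (10 + 10 * k.+1) by lia.
by rewrite IH //; lia.
Qed.

Lemma size_lz77_block_tail :
  size (lz77_suffix z (b + 5)) = d + 2 + size (lz77_suffix z (b + (10 + 10 * d))).
Proof.
rewrite (size_lz77_suffix_step _ phrase_len_prime_run); last by rewrite size_z; lia.
rewrite -addnA (size_lz77_suffix_step _ phrase_len_first_pair); last by rewrite size_z; lia.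
rewrite -addnA (size_lz77_suffix_step _ phrase_len_first_edge); last by rewrite size_z; lia.
rewrite -addnA.
by rewrite (@size_lz77_edges d.-1 1); lia.
Qed.

Lemma size_lz77_block_after_base pre' : pre = rcons pre' (Base v) ->
  size (lz77_suffix z b) = (size (lz77_suffix z (b + 5))).+1.
Proof.
move=> hpre; have hb : 0 < b by rewrite hpre size_rcons.
apply: size_lz77_suffix_step; first by rewrite size_z; lia.
apply: (@phrase_lenE _ _ _ _ 4 1) => //.
- by rewrite size_z; lia.
- right; exists b.-1; first by lia.
  have -> : drop b.-1 z = Base v :: block ++ post.
    by rewrite hpre size_rcons /= cat_rcons drop_size_cat.
  by rewrite drop_size_cat.
- eapply (@cat_window_fresh _ (Dollar v)); rewrite ?size_block //; try lia.
  by move=> i' hi'; fresh_by_symbols i' hi'.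
Qed.

Lemma size_lz77_block_at_start : pre = [::] ->
  size (lz77_suffix z b) = (size (lz77_suffix z (b + 5))).+2.
Proof.
move=> hpre; have hb : b = 0 by rewrite hpre.
have first_letter : phrase_len z b = 1.
  apply: (@phrase_lenE _ _ _ _ 0 1) => //; last by rewrite hb.
  - by rewrite size_z; lia.
  - by left.
have first_run : phrase_len z (b + 1) = 4.
  apply: (@phrase_lenE _ _ _ _ 3 1) => //.
  - by rewrite size_z; lia.
  - by right; exists 0; rewrite hpre.
  rewrite -addnA; eapply (@cat_window_fresh _ (Dollar v)); rewrite ?size_block //; try lia.
  by move=> i' hi'; fresh_by_symbols i' hi'.
rewrite (size_lz77_suffix_step _ first_letter); last by rewrite size_z; lia.
rewrite (size_lz77_suffix_step _ first_run); last by rewrite size_z; lia.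
by rewrite -addnA.
Qed.

Lemma size_lz77_block : (pre = [::] \/ exists pre', pre = rcons pre' (Base v)) ->
  size (lz77_suffix z b) = d + 3 + (pre == [::]) + size (lz77_suffix z (b + size block)).
Proof.
rewrite size_block => -[hpre | [pre' hpre]].
  by rewrite size_lz77_block_at_start // size_lz77_block_tail hpre /=; lia.
rewrite (size_lz77_block_after_base hpre) size_lz77_block_tail hpre.
by case: pre' {hpre} => [|x pre'] /=; lia.
Qed.
End Block.

Section Path.
Variables (V : eqType) (nbrs : V -> seq V).
Hypothesis nbrs_uniq : forall v, uniq (nbrs v).
Hypothesis outdeg_neq1 : forall v, outdeg nbrs v != 1.

Definition tagged_by (v : V) (x : sym V) : bool :=
  match x with Base _ => true | Prime u | Dollar u => u == v end.

Lemma all_tagged_block v j : all (tagged_by v) (s_str v ++ E_from nbrs v j).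
Proof.
rewrite all_cat /= eqxx /E_from.
by elim: (iota 0 _) => //= k s ->; rewrite /= eqxx.
Qed.

Lemma last_block v j x0 : 0 < outdeg nbrs v ->
  last x0 (s_str v ++ E_from nbrs v j) = Base (nbr nbrs v (j + (outdeg nbrs v).-1)).
Proof.
move=> hd; rewrite last_cat /E_from.
have -> : iota 0 (outdeg nbrs v) = iota 0 (outdeg nbrs v).-1 ++ [:: (outdeg nbrs v).-1].
  by rewrite -{1}(prednK hd) -addn1 iotaD add0n.
by rewrite map_cat flatten_cat last_cat /= /e_str /=.
Qed.

Lemma size_lz77_suffix_Y j0 rest v pre :
  path (fun x y => y \in nbrs x) v rest -> uniq (v :: rest) ->
  0 < outdeg nbrs (last v rest) ->
  {in v :: rest, forall u, Prime u \notin pre /\ Dollar u \notin pre} ->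
  (pre = [::] \/ exists pre', pre = rcons pre' (Base v)) ->
  size (lz77_suffix (pre ++ Y_str nbrs j0 v rest) (size pre)) =
    3 * size (v :: rest) + (pre == [::]) + sumn [seq outdeg nbrs u | u <- v :: rest].
Proof.
elim: rest v pre => [|w rest IH] v pre hpath huniq hlast hpre hhead.
  have hd : 1 < outdeg nbrs v by have := outdeg_neq1 v; move: hlast => /=; lia.
  have [hP hD] := hpre v (mem_head _ _).
  change (Y_str nbrs j0 v [::]) with (s_str v ++ E_from nbrs v j0).
  rewrite -[s_str v ++ _]cats0 (size_lz77_block (nbrs_uniq v) hd j0 [::] hP hD hhead).
  rewrite lz77_suffix_end; last by rewrite !size_cat /=; lia.
  by rewrite /=; lia.
case/andP: hpath => hw hpath.
have hd0 : 0 < outdeg nbrs v by rewrite /outdeg; case: (nbrs v) hw.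
have hd : 1 < outdeg nbrs v by have := outdeg_neq1 v; lia.
have [hP hD] := hpre v (mem_head _ _).
set j := (index w (nbrs v)).+1.
change (Y_str nbrs j0 v (w :: rest))
  with (s_str v ++ E_ending nbrs v w ++ Y_str nbrs j0 w rest).
rewrite /E_ending -/j (catA (s_str v)).
rewrite (size_lz77_block (nbrs_uniq v) hd j _ hP hD hhead).
rewrite (catA pre) -size_cat.
move: huniq; rewrite cons_uniq => /andP[hv huniq].
have hne : pre ++ (s_str v ++ E_from nbrs v j) != [::] by case: (pre).
rewrite IH //.
- by rewrite (negbTE hne) /=; lia.
- move=> u hu; have [hPu hDu] := hpre u (@mem_behead _ (v :: _) _ hu).
  have huv : u != v by apply: contraNneq hv => <-.
  rewrite !(mem_cat _ pre) (negbTE hPu) (negbTE hDu) !orFb.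
  have tagged := allP (all_tagged_block v j).
  by split; apply/negP => /tagged /= /eqP uv; rewrite uv eqxx in huv.
- have : last (Base w) (pre ++ (s_str v ++ E_from nbrs v j)) = Base w.
    rewrite last_cat last_block // /nbr /j addSnnS prednK //.
    by rewrite modnDr modn_small ?index_mem // nth_index.
  move: hne; case/lastP: (pre ++ _) => // s x _; rewrite last_rcons => ->.
  by right; exists s.
Qed.
End Path.

Theorem lemma9 (V : eqType) (nbrs : V -> seq V)
  (H_noloop : forall v, v \notin nbrs v)
  (H_simple : forall v, uniq (nbrs v))
  (H_deg : forall v, outdeg nbrs v != 1)
  (v1 : V) (vs : seq V)
  (H_path : path (fun x y => y \in nbrs x) v1 vs)
  (H_uniq : uniq (v1 :: vs))
  (H_last : 0 < outdeg nbrs (last v1 vs))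
  (j0 : nat) (H_j0 : j0 < outdeg nbrs (last v1 vs)) :
  size (lz77 (Y_str nbrs j0 v1 vs)) =
    3 * size (v1 :: vs) + 1 + sumn [seq outdeg nbrs v | v <- v1 :: vs].
Proof.
have := size_lz77_suffix_Y H_simple H_deg j0 H_path H_uniq H_last
  (pre := [::]) (fun _ _ => conj isT isT) (or_introl erefl).
by rewrite cat0s lz77E => <-.
Qed.
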